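(* The category $\sigma\mathbb{RS}_u$ is isomorphic to the variety $\mathcal{V}_{\sigma\mathbb{RS}_u}$ via the functor $T_u$ that forgets $\bigvee^-$ (interpreting $1$ as the designated weak unit; identity on maps) and the functor $E_u$ that adds $\bigvee^-(g,f_1,f_2,\dots):=\sup_{n\ge1}\{f_n\wedge g\}$ and interprets $1$ as the designated weak unit (identity on maps); these are well defined and mutually inverse. In particular the category of Dedekind $\sigma$-complete Riesz spaces with weak unit is an infinitary variety.
   Context: A weak unit of a Riesz space $G$ is an element $1\ge0$ such that $f\wedge1=0$ implies $f=0$. $\sigma\mathbb{RS}_u$: Dedekind $\sigma$-complete Riesz spaces (every countable bounded-above subset has a supremum) with a designated weak unit, and Riesz morphisms preserving existing countable suprema and the designated unit. $\mathcal{V}_{\sigma\mathbb{RS}_u}$: algebras with the Riesz space operations, a countably infinitary operation $\bigvee^-$ (write $\bigvee_{n\ge1}^g f_n:=\bigvee^-(g,f_1,f_2,\dots)$) and a constant $1$, satisfying the Riesz space axioms, (A1) $\bigvee_{n\ge1}^g f_n=\bigvee_{n\ge1}^g(f_n\wedge g)$; (A2) $\bigvee_{n\ge1}^g f_n=(f_1\wedge g)\vee\bigvee^-(g,f_2,f_3,\dots)$; (A3) $\bigvee_{n\ge1}^g(f_n\wedge h)\le h$ ($a\le b$ meaning $a\wedge b=a$); and $\bigvee_{n\ge1}^{|f|}(|f|\wedge n1)=|f|$. Morphisms preserve all operations. *)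

From Stdlib Require Import Reals ClassicalEpsilon.
Open Scope R_scope.

Record RieszOps (G : Type) := {
  radd : G -> G -> G;
  ropp : G -> G;
  rzero : G;
  rscal : R -> G -> G;
  rmeet : G -> G -> G;
  rjoin : G -> G -> G }.
Arguments radd {G}. Arguments ropp {G}. Arguments rzero {G}.
Arguments rscal {G}. Arguments rmeet {G}. Arguments rjoin {G}.

Section RieszDefs.
Context {G : Type} (o : RieszOps G).

Definition rle (a b : G) : Prop := rmeet o a b = a.

Definition rabs (f : G) : G := rjoin o f (ropp o f).

Definition is_riesz : Prop :=
  (forall x y z, radd o x (radd o y z) = radd o (radd o x y) z) /\
  (forall x y, radd o x y = radd o y x) /\
  (forall x, radd o (rzero o) x = x) /\
  (forall x, radd o x (ropp o x) = rzero o) /\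
  (forall a x y, rscal o a (radd o x y) = radd o (rscal o a x) (rscal o a y)) /\
  (forall a b x, rscal o (a + b) x = radd o (rscal o a x) (rscal o b x)) /\
  (forall a b x, rscal o (a * b) x = rscal o a (rscal o b x)) /\
  (forall x, rscal o 1 x = x) /\
  (forall x y, rmeet o x y = rmeet o y x) /\
  (forall x y, rjoin o x y = rjoin o y x) /\
  (forall x y z, rmeet o x (rmeet o y z) = rmeet o (rmeet o x y) z) /\
  (forall x y z, rjoin o x (rjoin o y z) = rjoin o (rjoin o x y) z) /\
  (forall x y, rmeet o x (rjoin o x y) = x) /\
  (forall x y, rjoin o x (rmeet o x y) = x) /\
  (forall x y z, rle x y -> rle (radd o x z) (radd o y z)) /\
  (forall c x y, rle x y -> 0 <= c -> rle (rscal o c x) (rscal o c y)).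

Definition is_sup (f : nat -> G) (s : G) : Prop :=
  (forall n, rle (f n) s) /\ (forall b, (forall n, rle (f n) b) -> rle s b).

Definition dedekind_sigma_complete : Prop :=
  forall f : nat -> G, (exists b, forall n, rle (f n) b) -> exists s, is_sup f s.

Definition weak_unit (u : G) : Prop :=
  rle (rzero o) u /\ forall f, rmeet o f u = rzero o -> f = rzero o.
End RieszDefs.

Record RSu := { rs_car : Type; rs_ops : RieszOps rs_car; rs_unit : rs_car }.

Definition is_sRSu (X : RSu) : Prop :=
  is_riesz (rs_ops X) /\ dedekind_sigma_complete (rs_ops X) /\
  weak_unit (rs_ops X) (rs_unit X).

Definition riesz_morphism {G H : Type} (o : RieszOps G) (p : RieszOps H)
  (h : G -> H) : Prop :=
  (forall x y, h (radd o x y) = radd p (h x) (h y)) /\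
  (forall a x, h (rscal o a x) = rscal p a (h x)) /\
  (forall x y, h (rmeet o x y) = rmeet p (h x) (h y)) /\
  (forall x y, h (rjoin o x y) = rjoin p (h x) (h y)).

Definition sRSu_mor (X Y : RSu) (h : rs_car X -> rs_car Y) : Prop :=
  riesz_morphism (rs_ops X) (rs_ops Y) h /\
  (forall f s, is_sup (rs_ops X) f s -> is_sup (rs_ops Y) (fun n => h (f n)) (h s)) /\
  h (rs_unit X) = rs_unit Y.

(* Raw algebras of the signature of V_{sigma RS_u}.
   v_bv g f  stands for  \bigvee^-(g, f_1, f_2, ...)  with  f_{k+1} = f k. *)
Record VAlg := {
  v_car : Type; v_ops : RieszOps v_car;
  v_bv : v_car -> (nat -> v_car) -> v_car; v_one : v_car }.

Definition is_V (A : VAlg) : Prop :=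
  let o := v_ops A in let bv := v_bv A in
  is_riesz o /\
  (forall g f, bv g f = bv g (fun n => rmeet o (f n) g)) /\
  (forall g f, bv g f = rjoin o (rmeet o (f 0%nat) g) (bv g (fun n => f (S n)))) /\
  (forall g f h, rle o (bv g (fun n => rmeet o (f n) h)) h) /\
  (forall f, bv (rabs o f) (fun k => rmeet o (rabs o f) (rscal o (INR (S k)) (v_one A)))
             = rabs o f).

Definition V_mor (A B : VAlg) (h : v_car A -> v_car B) : Prop :=
  riesz_morphism (v_ops A) (v_ops B) h /\
  (forall x, h (ropp (v_ops A) x) = ropp (v_ops B) (h x)) /\
  h (rzero (v_ops A)) = rzero (v_ops B) /\
  (forall g f, h (v_bv A g f) = v_bv B (h g) (fun n => h (f n))) /\
  h (v_one A) = v_one B.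

Definition Tu (A : VAlg) : RSu :=
  {| rs_car := v_car A; rs_ops := v_ops A; rs_unit := v_one A |}.

Definition Eu (X : RSu) : VAlg :=
  {| v_car := rs_car X; v_ops := rs_ops X;
     v_bv := fun g f => epsilon (inhabits (rzero (rs_ops X)))
                          (is_sup (rs_ops X) (fun n => rmeet (rs_ops X) (f n) g));
     v_one := rs_unit X |}.

(* E_u and T_u do not touch carriers, Riesz operations, units or maps, so the theorem
   rests on two facts.  In an algebra of the variety, A1-A3 force ⋁^g f to be the supremum
   of the f n ⊓ g; hence T_u A is σ-complete and A4 says that every x ≥ 0 is the supremum
   of the x ⊓ n·1.  In a Riesz space, that property of u is equivalent, under
   σ-completeness, to u being a weak unit: the positive part of -u and every positive
   element disjoint from u are disjoint from all multiples of u, hence zero.  Morphisms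
   then commute with ⋁^- because they preserve meets and countable suprema, and a
   supremum s of f is ⋁^s f. *)

From Stdlib Require Import Reals ClassicalEpsilon FunctionalExtensionality.

Section RieszSpace.
Context {G : Type} (o : RieszOps G) (Ho : is_riesz o).

Local Infix "⊕" := (radd o) (at level 50, left associativity).
Local Infix "⊓" := (rmeet o) (at level 40, left associativity).
Local Infix "⊔" := (rjoin o) (at level 40, left associativity).
Local Notation "- x" := (ropp o x).
Local Notation "0" := (rzero o).
Local Infix "≼" := (rle o) (at level 70).
Local Notation "c · x" := (rscal o c x) (at level 35, right associativity).

Local Ltac riesz_axiom :=
  destruct Ho as (?&?&?&?&?&?&?&?&?&?&?&?&?&?&?&?); auto.

Lemma addA x y z : x ⊕ (y ⊕ z) = x ⊕ y ⊕ z.  Proof. riesz_axiom. Qed.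
Lemma addC x y : x ⊕ y = y ⊕ x.  Proof. riesz_axiom. Qed.
Lemma add0l x : 0 ⊕ x = x.  Proof. riesz_axiom. Qed.
Lemma addNr x : x ⊕ - x = 0.  Proof. riesz_axiom. Qed.
Lemma scaleDr a x y : a · (x ⊕ y) = a · x ⊕ a · y.  Proof. riesz_axiom. Qed.
Lemma scaleDl a b x : (a + b)%R · x = a · x ⊕ b · x.  Proof. riesz_axiom. Qed.
Lemma scale1 x : 1%R · x = x.  Proof. riesz_axiom. Qed.
Lemma meetC x y : x ⊓ y = y ⊓ x.  Proof. riesz_axiom. Qed.
Lemma joinC x y : x ⊔ y = y ⊔ x.  Proof. riesz_axiom. Qed.
Lemma meetA x y z : x ⊓ (y ⊓ z) = x ⊓ y ⊓ z.  Proof. riesz_axiom. Qed.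
Lemma joinA x y z : x ⊔ (y ⊔ z) = x ⊔ y ⊔ z.  Proof. riesz_axiom. Qed.
Lemma meetKJ x y : x ⊓ (x ⊔ y) = x.  Proof. riesz_axiom. Qed.
Lemma joinKM x y : x ⊔ (x ⊓ y) = x.  Proof. riesz_axiom. Qed.
Lemma le_add x y z : x ≼ y -> x ⊕ z ≼ y ⊕ z.  Proof. riesz_axiom. Qed.
Lemma le_scale c x y : x ≼ y -> (0 <= c)%R -> c · x ≼ c · y.  Proof. riesz_axiom. Qed.

Lemma add0r x : x ⊕ 0 = x.
Proof. rewrite addC; apply add0l. Qed.
Lemma addNl x : - x ⊕ x = 0.
Proof. rewrite addC; apply addNr. Qed.
Lemma addKl x y : - x ⊕ (x ⊕ y) = y.
Proof. rewrite addA, addNl; apply add0l. Qed.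
Lemma addNKl x y : x ⊕ (- x ⊕ y) = y.
Proof. rewrite addA, addNr; apply add0l. Qed.
Lemma addI x y z : x ⊕ y = x ⊕ z -> y = z.
Proof. intro e. rewrite <- (addKl x y), e; apply addKl. Qed.
Lemma opp_unique x y : x ⊕ y = 0 -> y = - x.
Proof. intro e. apply (addI x). rewrite e, addNr; reflexivity. Qed.
Lemma oppK x : - - x = x.
Proof. symmetry; apply opp_unique, addNl. Qed.
Lemma opp0 : - 0 = 0.
Proof. symmetry; apply opp_unique, add0l. Qed.
Lemma scale0 c : c · 0 = 0.
Proof. apply (addI (c · 0)). rewrite <- scaleDr, !add0r; reflexivity. Qed.
Lemma scale_0 x : 0%R · x = 0.
Proof. apply (addI (0%R · x)). rewrite <- scaleDl, Rplus_0_r, add0r; reflexivity. Qed.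
Lemma scaleS k x : INR (S k) · x = INR k · x ⊕ x.
Proof. rewrite S_INR, scaleDl, scale1; reflexivity. Qed.

Lemma meetI x : x ⊓ x = x.
Proof. rewrite <- (joinKM x x) at 2. apply meetKJ. Qed.
Lemma meetIK x y : x ⊓ y ⊓ y = x ⊓ y.
Proof. rewrite <- meetA, meetI; reflexivity. Qed.
Lemma meetIIl x y : x ⊓ y ⊓ x = x ⊓ y.
Proof. rewrite (meetC _ x), meetA, meetI; reflexivity. Qed.
Lemma le_refl x : x ≼ x.
Proof. apply meetI. Qed.
Lemma le_antisym x y : x ≼ y -> y ≼ x -> x = y.
Proof. unfold rle; intros exy eyx. rewrite <- exy, meetC. exact eyx. Qed.
Lemma le_trans x y z : x ≼ y -> y ≼ z -> x ≼ z.
Proof. unfold rle; intros exy eyz. rewrite <- exy at 1. rewrite <- meetA, eyz; exact exy. Qed.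
Lemma meet_le_l a b : a ⊓ b ≼ a.
Proof. unfold rle. rewrite (meetC a b), <- meetA, meetI; reflexivity. Qed.
Lemma meet_le_r a b : a ⊓ b ≼ b.
Proof. unfold rle. rewrite <- meetA, meetI; reflexivity. Qed.
Lemma meet_glb a b c : c ≼ a -> c ≼ b -> c ≼ a ⊓ b.
Proof. unfold rle; intros ea eb. rewrite meetA, ea, eb; reflexivity. Qed.
Lemma join_ge_l a b : a ≼ a ⊔ b.
Proof. apply meetKJ. Qed.
Lemma join_ge_r a b : b ≼ a ⊔ b.
Proof. rewrite joinC; apply meetKJ. Qed.
Lemma join_idPr a b : a ≼ b -> a ⊔ b = b.
Proof. unfold rle; intro e. rewrite <- e, joinC, meetC; apply joinKM. Qed.
Lemma join_lub a b c : a ≼ c -> b ≼ c -> a ⊔ b ≼ c.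
Proof.
  intros ac bc.
  assert (e : a ⊔ b ⊔ c = c)
    by (rewrite <- joinA, (join_idPr _ _ bc), (join_idPr _ _ ac); reflexivity).
  unfold rle. rewrite <- e. apply meetKJ.
Qed.
Lemma meet_mono a b a' b' : a ≼ a' -> b ≼ b' -> a ⊓ b ≼ a' ⊓ b'.
Proof.
  intros ha hb. apply meet_glb.
  - exact (le_trans _ _ _ (meet_le_l a b) ha).
  - exact (le_trans _ _ _ (meet_le_r a b) hb).
Qed.

Lemma le_addl x y z : x ≼ y -> z ⊕ x ≼ z ⊕ y.
Proof. intro e; rewrite (addC z x), (addC z y); apply le_add, e. Qed.
Lemma le_addl_rev x y z : z ⊕ x ≼ z ⊕ y -> x ≼ y.
Proof. intro e. apply (le_addl _ _ (- z)) in e. rewrite !addKl in e; exact e. Qed.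
Lemma le_opp x y : x ≼ y -> - y ≼ - x.
Proof.
  intro e. apply (le_add _ _ (- x ⊕ - y)) in e.
  rewrite addA, addNr, add0l, (addC (- x)), addA, addNr, add0l in e; exact e.
Qed.
Lemma le_sub0 x y : x ≼ y -> 0 ≼ y ⊕ - x.
Proof. intro e. rewrite <- (addNr x). apply le_add, e. Qed.

Lemma meet_addl c a b : c ⊕ (a ⊓ b) = (c ⊕ a) ⊓ (c ⊕ b).
Proof.
  apply le_antisym.
  - apply meet_glb; apply le_addl; [apply meet_le_l | apply meet_le_r].
  - apply (le_addl_rev _ _ (- c)). rewrite addKl. apply meet_glb.
    + rewrite <- (addKl c a) at 2. apply le_addl, meet_le_l.
    + rewrite <- (addKl c b) at 2. apply le_addl, meet_le_r.
Qed.
Lemma join_addl c a b : c ⊕ (a ⊔ b) = (c ⊕ a) ⊔ (c ⊕ b).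
Proof.
  apply le_antisym.
  - apply (le_addl_rev _ _ (- c)). rewrite addKl. apply join_lub.
    + rewrite <- (addKl c a) at 1. apply le_addl, join_ge_l.
    + rewrite <- (addKl c b) at 1. apply le_addl, join_ge_r.
  - apply join_lub; apply le_addl; [apply join_ge_l | apply join_ge_r].
Qed.
Lemma opp_meet a b : - (a ⊓ b) = - a ⊔ - b.
Proof.
  apply le_antisym.
  - rewrite <- (oppK (- a ⊔ - b)). apply le_opp, meet_glb.
    + rewrite <- (oppK a) at 2. apply le_opp, join_ge_l.
    + rewrite <- (oppK b) at 2. apply le_opp, join_ge_r.
  - apply join_lub; apply le_opp; [apply meet_le_l | apply meet_le_r].
Qed.
Lemma scale_ge0 c x : (0 <= c)%R -> 0 ≼ x -> 0 ≼ c · x.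
Proof. intros hc hx. rewrite <- (scale0 c). apply le_scale; assumption. Qed.

Lemma abs_ge0_id x : 0 ≼ x -> rabs o x = x.
Proof.
  intro hx. unfold rabs. rewrite joinC. apply join_idPr.
  apply (le_trans _ 0); [rewrite <- opp0; apply le_opp | ]; exact hx.
Qed.

Lemma meet_add_le x a b :
  0 ≼ x -> 0 ≼ a -> 0 ≼ b -> x ⊓ (a ⊕ b) ≼ x ⊓ a ⊕ x ⊓ b.
Proof.
  intros hx ha hb. set (w := x ⊓ (a ⊕ b)).
  assert (k : w ⊕ - (x ⊓ a) ≼ x ⊓ b).
  { rewrite opp_meet, join_addl. apply join_lub.
    - assert (wx : w ⊕ - x ≼ 0) by (rewrite <- (addNr x); apply le_add, meet_le_l).
      apply meet_glb; apply (le_trans _ 0); assumption.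
    - apply meet_glb.
      + apply (le_trans _ w); [ | apply meet_le_l].
        rewrite <- (add0r w) at 2. apply le_addl. rewrite <- opp0. apply le_opp, ha.
      + rewrite <- (addKl a b), (addC w (- a)). apply le_addl, meet_le_r. }
  apply (le_add _ _ (x ⊓ a)) in k.
  rewrite <- addA, addNl, add0r in k. rewrite addC; exact k.
Qed.

Lemma disjoint_scale_nat x y n :
  0 ≼ x -> 0 ≼ y -> x ⊓ y = 0 -> x ⊓ INR n · y = 0.
Proof.
  intros hx hy e. induction n as [ | n IHn].
  - simpl. rewrite scale_0, meetC. exact hx.
  - assert (ny : 0 ≼ INR n · y) by (apply scale_ge0; [apply pos_INR | exact hy]).
    apply le_antisym.
    + rewrite scaleS. apply (le_trans _ (x ⊓ INR n · y ⊕ x ⊓ y)); [apply meet_add_le; assumption | ].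
      rewrite IHn, e, add0l. apply le_refl.
    + apply meet_glb; [exact hx | apply scale_ge0; [apply pos_INR | exact hy]].
Qed.

Lemma neg_part_disjoint x : (- x ⊔ 0) ⊓ (x ⊔ 0) = 0.
Proof.
  assert (em : - x ⊔ 0 = (x ⊔ 0) ⊕ - x)
    by (rewrite addC, join_addl, addNl, add0r, joinC; reflexivity).
  rewrite meetC, em. rewrite <- (add0r (x ⊔ 0)) at 1.
  rewrite <- meet_addl, <- (oppK (0 ⊓ - x)), opp_meet, opp0, oppK, joinC, addNr.
  reflexivity.
Qed.

Lemma is_sup_unique f s s' : is_sup o f s -> is_sup o f s' -> s = s'.
Proof. intros [ub lub] [ub' lub']. apply le_antisym; [apply lub, ub' | apply lub', ub]. Qed.

Lemma is_sup_ext f g s : (forall n, f n = g n) -> is_sup o g s -> is_sup o f s.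
Proof.
  intros e [ub lub]. split.
  - intro n. rewrite e. apply ub.
  - intros b hb. apply lub. intro n. rewrite <- e. apply hb.
Qed.

Lemma is_sup_cons f s : is_sup o (fun n => f (S n)) s -> is_sup o f (f 0%nat ⊔ s).
Proof.
  intros [ub lub]. split.
  - intros [ | n]; [apply join_ge_l | apply (le_trans _ s); [apply ub | apply join_ge_r]].
  - intros b hb. apply join_lub; [apply hb | apply lub; intro n; apply hb].
Qed.

Section WeakUnit.
Variable u : G.

(* The sequence x ⊓ (k+1)u is increasing by at least (x - s) ⊓ u at each step, where
   s is its supremum; so that increment vanishes, and x = s because u is a weak unit. *)
Lemma weak_unit_sup_multiples :
  dedekind_sigma_complete o -> weak_unit o u ->
  forall x, is_sup o (fun k => x ⊓ INR (S k) · u) x.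
Proof.
  intros hd [u0 hw] x.
  destruct (hd (fun k => x ⊓ INR (S k) · u)) as [s [ub lub]];
    [exists x; intro; apply meet_le_l | ].
  assert (sx : s ≼ x) by (apply lub; intro; apply meet_le_l).
  set (d := x ⊕ - s).
  assert (step : forall k, x ⊓ INR (S k) · u ⊕ d ⊓ u ≼ x ⊓ INR (S (S k)) · u).
  { intro k. set (t := x ⊓ INR (S k) · u).
    apply (le_trans _ (t ⊕ (x ⊕ - t) ⊓ u)).
    - apply le_addl, meet_mono; [ | apply le_refl]. apply le_addl, le_opp, ub.
    - rewrite meet_addl, (addC x (- t)), addNKl, (addC t u). unfold t.
      rewrite meet_addl, (scaleS (S k)), (addC _ u). apply meet_glb; [apply meet_le_l | ].
      apply (le_trans _ ((u ⊕ x) ⊓ (u ⊕ INR (S k) · u))); apply meet_le_r. }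
  assert (du0 : d ⊓ u = 0).
  { apply le_antisym; [ | apply meet_glb; [apply le_sub0, sx | exact u0]].
    apply (le_addl_rev _ _ (- (d ⊓ u) ⊕ s)).
    rewrite (addC (- (d ⊓ u)) s), <- addA, addNl, !add0r.
    apply lub. intro k. apply (le_addl_rev _ _ (d ⊓ u)).
    rewrite (addC s (- (d ⊓ u))), addNKl, addC.
    apply (le_trans _ _ _ (step k)), ub. }
  apply hw, opp_unique in du0.
  assert (xs : s = x) by (rewrite <- (oppK s), du0, oppK; reflexivity).
  rewrite xs in ub, lub. split; assumption.
Qed.

Hypothesis sup_multiples : forall x, 0 ≼ x -> is_sup o (fun k => x ⊓ INR (S k) · u) x.

Lemma sup_multiples_disjoint_zero f v : 0 ≼ f -> 0 ≼ v -> u ≼ v -> f ⊓ v = 0 -> f = 0.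
Proof.
  intros hf hv uv e. apply le_antisym; [ | exact hf].
  apply (sup_multiples f hf). intro k.
  rewrite <- (disjoint_scale_nat f v (S k) hf hv e).
  apply meet_mono; [apply le_refl | apply le_scale; [exact uv | apply pos_INR]].
Qed.

Lemma sup_multiples_weak_unit : weak_unit o u.
Proof.
  assert (u0 : 0 ≼ u).
  { assert (mz : - u ⊔ 0 = 0).
    { apply (sup_multiples_disjoint_zero _ (u ⊔ 0));
        [apply join_ge_r | apply join_ge_r | apply join_ge_l | apply neg_part_disjoint]. }
    assert (nu : - u ≼ 0) by (rewrite <- mz; apply join_ge_l).
    apply le_opp in nu. rewrite opp0, oppK in nu. exact nu. }
  split; [exact u0 | ]. intros f e.
  apply (sup_multiples_disjoint_zero _ u); [rewrite <- e; apply meet_le_l | exact u0 | apply le_refl | exact e].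
Qed.

End WeakUnit.
End RieszSpace.

Lemma additive_map0 {G H : Type} (o : RieszOps G) (p : RieszOps H) (h : G -> H) :
  is_riesz o -> is_riesz p -> (forall x y, h (radd o x y) = radd p (h x) (h y)) ->
  h (rzero o) = rzero p.
Proof.
  intros Ho Hp ha. apply (addI p Hp (h (rzero o))).
  rewrite <- ha, (add0r o Ho), (add0r p Hp). reflexivity.
Qed.

Lemma additive_mapN {G H : Type} (o : RieszOps G) (p : RieszOps H) (h : G -> H) :
  is_riesz o -> is_riesz p -> (forall x y, h (radd o x y) = radd p (h x) (h y)) ->
  forall x, h (ropp o x) = ropp p (h x).
Proof.
  intros Ho Hp ha x. apply (opp_unique p Hp).
  rewrite <- ha, (addNr o Ho). apply (additive_map0 o p h Ho Hp ha).
Qed.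

Lemma Eu_bv_is_sup X : is_sRSu X -> forall g f,
  is_sup (rs_ops X) (fun n => rmeet (rs_ops X) (f n) g) (v_bv (Eu X) g f).
Proof.
  intros (Hr & Hd & _) g f. simpl. apply epsilon_spec, Hd.
  exists g. intro n. apply (meet_le_r _ Hr).
Qed.

Lemma V_bv_is_sup A : is_V A -> forall g f,
  is_sup (v_ops A) (fun n => rmeet (v_ops A) (f n) g) (v_bv A g f).
Proof.
  intros (Hr & A1 & A2 & A3 & _) g f. split.
  - intro n. revert f. induction n as [ | n IHn]; intro f; rewrite (A2 g f).
    + apply (join_ge_l _ Hr).
    + apply (le_trans _ Hr _ _ _ (IHn (fun n => f (S n)))), (join_ge_r _ Hr).
  - intros b hb. rewrite A1.
    replace (fun n => rmeet (v_ops A) (f n) g)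
      with (fun n => rmeet (v_ops A) (rmeet (v_ops A) (f n) g) b)
      by (apply functional_extensionality; intro n; apply hb).
    apply A3.
Qed.

Lemma Eu_is_V X : is_sRSu X -> is_V (Eu X).
Proof.
  intro hX. pose proof (Eu_bv_is_sup X hX) as ES. destruct hX as (Hr & Hd & Hu).
  set (o := rs_ops X). split; [exact Hr | split; [ | split; [ | split]]].
  - intros g f. apply (is_sup_unique o Hr (fun n => rmeet o (f n) g)); [apply ES | ].
    apply (is_sup_ext o _ _ _ (fun n => eq_sym (meetIK o Hr (f n) g))), ES.
  - intros g f. apply (is_sup_unique o Hr (fun n => rmeet o (f n) g)); [apply ES | ].
    apply (is_sup_cons o Hr), ES.
  - intros g f h. apply (ES g (fun n => rmeet o (f n) h)). intro n.
    apply (le_trans o Hr _ _ _ (meet_le_l o Hr _ _)), (meet_le_r o Hr).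
  - intro f. apply (is_sup_unique o Hr _ _ _ (ES _ _)).
    apply (is_sup_ext o _ (fun k => rmeet o (rabs o f) (rscal o (INR (S k)) (rs_unit X)))).
    + intro k. apply (meetIIl o Hr).
    + apply (weak_unit_sup_multiples o Hr); assumption.
Qed.

Lemma Tu_is_sRSu A : is_V A -> is_sRSu (Tu A).
Proof.
  intro hA. pose proof (V_bv_is_sup A hA) as BS. destruct hA as (Hr & _ & _ & _ & A4).
  split; [exact Hr | split].
  - intros f [b hb]. exists (v_bv A b f).
    apply (is_sup_ext _ _ _ _ (fun n => eq_sym (hb n))), BS.
  - apply (sup_multiples_weak_unit _ Hr). intros x x0.
    pose proof (BS (rabs (v_ops A) x)
      (fun k => rmeet (v_ops A) (rabs (v_ops A) x) (rscal (v_ops A) (INR (S k)) (v_one A))))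
      as K.
    rewrite A4, (abs_ge0_id _ Hr x x0) in K.
    exact (is_sup_ext _ _ _ _ (fun k => eq_sym (meetIIl _ Hr _ _)) K).
Qed.

Lemma Eu_mor X Y h :
  is_sRSu X -> is_sRSu Y -> sRSu_mor X Y h -> V_mor (Eu X) (Eu Y) h.
Proof.
  intros hX hY (hm & hs & hu).
  pose proof (Eu_bv_is_sup X hX) as EX. pose proof (Eu_bv_is_sup Y hY) as EY.
  destruct hX as (HrX & _). destruct hY as (HrY & _).
  set (p := rs_ops Y). destruct hm as (ha & hsc & hme & hj).
  split; [repeat split; assumption | split; [ | split; [ | split; [ | exact hu]]]].
  - exact (additive_mapN _ _ h HrX HrY ha).
  - exact (additive_map0 _ _ h HrX HrY ha).
  - intros g f. apply (is_sup_unique p HrY (fun n => rmeet p (h (f n)) (h g))); [ | apply EY].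
    apply (is_sup_ext p _ _ _ (fun n => eq_sym (hme (f n) g)) (hs _ _ (EX g f))).
Qed.

Lemma Tu_mor A B h : is_V A -> is_V B -> V_mor A B h -> sRSu_mor (Tu A) (Tu B) h.
Proof.
  intros hA hB (hm & _ & _ & hbv & hu).
  pose proof (V_bv_is_sup A hA) as BA. pose proof (V_bv_is_sup B hB) as BB.
  destruct hA as (HrA & _). set (o := v_ops A). set (p := v_ops B).
  split; [exact hm | split; [ | exact hu]].
  intros f s hsup. simpl in hsup. pose proof hsup as [ub _].
  (* bounding the terms by their supremum s does not change them, so s = ⋁^s f *)
  assert (bv_s : v_bv A s f = s).
  { apply (is_sup_unique o HrA (fun n => rmeet o (f n) s)); [apply BA | ].
    apply (is_sup_ext o _ _ _ ub hsup). }
  simpl. rewrite <- bv_s, hbv.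
  apply (is_sup_ext p _ (fun n => rmeet p (h (f n)) (h s))); [ | apply BB].
  intro n. destruct hm as (_ & _ & hme & _). rewrite <- hme, (ub n). reflexivity.
Qed.

Lemma Tu_Eu X : Tu (Eu X) = X.
Proof. destruct X. reflexivity. Qed.

Lemma Eu_Tu A : is_V A -> Eu (Tu A) = A.
Proof.
  intro hA. pose proof (V_bv_is_sup A hA) as BA. destruct hA as (Hr & _).
  destruct A as [car o bv one]. unfold Eu, Tu. simpl in *. f_equal.
  apply functional_extensionality; intro g. apply functional_extensionality; intro f.
  apply (is_sup_unique o Hr (fun n => rmeet o (f n) g)); [ | apply BA].
  apply epsilon_spec. exists (bv g f). apply BA.
Qed.

Theorem mainTheorem4 :
  (forall X : RSu, is_sRSu X -> is_V (Eu X)) /\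
  (forall A : VAlg, is_V A -> is_sRSu (Tu A)) /\
  (forall (X Y : RSu) (h : rs_car X -> rs_car Y), is_sRSu X -> is_sRSu Y ->
     sRSu_mor X Y h -> V_mor (Eu X) (Eu Y) h) /\
  (forall (A B : VAlg) (h : v_car A -> v_car B), is_V A -> is_V B ->
     V_mor A B h -> sRSu_mor (Tu A) (Tu B) h) /\
  (forall X : RSu, is_sRSu X -> Tu (Eu X) = X) /\
  (forall A : VAlg, is_V A -> Eu (Tu A) = A).
Proof.
  split; [exact Eu_is_V | ].
  split; [exact Tu_is_sRSu | ].
  split; [exact Eu_mor | ].
  split; [exact Tu_mor | ].
  split; [intros X _; apply Tu_Eu | exact Eu_Tu].
Qed.
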